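(* There is an isomorphism of $\mathbb{Z}^n$-graded algebras $\mathrm{Cl}_q(n,k)\cong \mathrm{Cl}_q(1,k)^{\otimes n}$ (ordinary tensor product of $\mathbb{k}$-algebras).
   Context: Let $\mathbb{k}$ be a field of characteristic different from $2$, let $q\in\mathbb{k}^\times$, and let $N,k$ be positive integers. The quantum Clifford algebra $\mathrm{Cl}_q(N,k)$ is the unital associative $\mathbb{k}$-algebra generated by $\psi_a,\psi_a^*,\omega_a,\omega_a^{-1}$ for $a\in\{1,\dots,N\}$, subject to the relations (for all $a,b\in\{1,\dots,N\}$): $\omega_a\omega_b=\omega_b\omega_a$; $\omega_a\omega_a^{-1}=1$; $\omega_a\psi_b=q^{\delta_{ab}}\psi_b\omega_a$; $\omega_a\psi_b^*=q^{-\delta_{ab}}\psi_b^*\omega_a$; $\psi_a\psi_b+\psi_b\psi_a=0$; $\psi_a^*\psi_b^*+\psi_b^*\psi_a^*=0$; $\psi_a\psi_a^*+q^k\psi_a^*\psi_a=\omega_a^{-k}$; $\psi_a\psi_a^*+q^{-k}\psi_a^*\psi_a=\omega_a^{k}$; and $\psi_a\psi_b^*+\psi_b^*\psi_a=0$ if $a\neq b$. It carries a $\mathbb{Z}^N$-grading with $\deg\psi_a=e_a$, $\deg\psi_a^*=-e_a$, $\deg\omega_a=0$. The tensor power $\mathrm{Cl}_q(1,k)^{\otimes n}$ is $\mathbb{Z}^n$-graded by giving the $j$th factor degrees in $\mathbb{Z}e_j$. *)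

From HB Require Import structures.
From mathcomp Require Import all_boot all_order all_algebra.
Set Implicit Arguments. Unset Strict Implicit. Unset Printing Implicit Defensive.
Import Order.TTheory GRing.Theory Num.Theory.
Local Open Scope ring_scope.

Inductive clgen (N : nat) : Type :=
  | Psi of 'I_N | PsiS of 'I_N | Om of 'I_N | OmI of 'I_N.

Definition unitdeg (N : nat) (a : 'I_N) : {ffun 'I_N -> int} :=
  [ffun b => ((b == a) : nat)%:Z].

Definition cl_deg (N : nat) (g : clgen N) : {ffun 'I_N -> int} :=
  match g with
  | Psi a => unitdeg a
  | PsiS a => - unitdeg a
  | Om _ => 0
  | OmI _ => 0
  end.

Definition is_alg_hom (F : fieldType) (A B : algType F) (f : A -> B) : Prop :=
  [/\ forall x y, f (x + y) = f x + f y,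
      forall (c : F) x, f (c *: x) = c *: f x,
      f 1 = 1 &
      forall x y, f (x * y) = f x * f y].

Definition cl_rel (F : fieldType) (q : F) (N k : nat) (A : algType F)
    (g : clgen N -> A) : Prop :=
  let psi a := g (Psi a) in let psis a := g (PsiS a) in
  let om a := g (Om a) in let omi a := g (OmI a) in
  forall a b : 'I_N,
  om a * om b = om b * om a /\
  om a * omi a = 1 /\
  omi a * om a = 1 /\
  om a * psi b = (if a == b then q else 1) *: (psi b * om a) /\
  om a * psis b = (if a == b then q^-1 else 1) *: (psis b * om a) /\
  psi a * psi b + psi b * psi a = 0 /\
  psis a * psis b + psis b * psis a = 0 /\
  psi a * psis a + q ^+ k *: (psis a * psi a) = omi a ^+ k /\
  psi a * psis a + q ^- k *: (psis a * psi a) = om a ^+ k /\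
  (a != b -> psi a * psis b + psis b * psi a = 0).

(* (A, g) is the algebra presented by these generators and relations,
   i.e. (A, g) is Cl_q(N,k) (characterized by its universal property). *)
Definition is_Cl (F : fieldType) (q : F) (N k : nat) (A : algType F)
    (g : clgen N -> A) : Prop :=
  cl_rel q k g /\
  forall (D : algType F) (h : clgen N -> D), cl_rel q k h ->
    exists f : A -> D,
      [/\ is_alg_hom f, (forall x, f (g x) = h x) &
          forall f' : A -> D, is_alg_hom f' -> (forall x, f' (g x) = h x) ->
            forall y, f' y = f y].

(* (B, iota) is the n-fold (ordinary) tensor power C^{\otimes n} of the
   k-algebra C, iota j being the inclusion of the j-th tensor factor;
   characterized by the universal property of the tensor product of algebras. *)
Definition is_tensor_power (F : fieldType) (C B : algType F) (n : nat)
    (iota : 'I_n -> C -> B) : Prop :=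
  [/\ forall j, is_alg_hom (iota j),
      (forall (i j : 'I_n) x y, i != j -> iota i x * iota j y = iota j y * iota i x) &
      forall (D : algType F) (gg : 'I_n -> C -> D),
        (forall j, is_alg_hom (gg j)) ->
        (forall (i j : 'I_n) x y, i != j -> gg i x * gg j y = gg j y * gg i x) ->
        exists h : B -> D,
          [/\ is_alg_hom h, (forall j x, h (iota j x) = gg j x) &
              forall h' : B -> D, is_alg_hom h' ->
                (forall j x, h' (iota j x) = gg j x) -> forall y, h' y = h y]].

(* Homogeneous component of degree d of an algebra graded by declaring the
   generators gen l homogeneous of degree deg l: the span of the words in the
   generators of total degree d. *)
Definition hcomp (F : fieldType) (A : algType F) (L : Type) (N : nat)
    (gen : L -> A) (deg : L -> {ffun 'I_N -> int}) (d : {ffun 'I_N -> int})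
    (x : A) : Prop :=
  exists s : seq (F * seq L),
    all (fun p => \sum_(l <- p.2) deg l == d) s /\
    x = \sum_(p <- s) p.1 *: \prod_(l <- p.2) gen l.

(* Generators of the tensor power: iota j applied to the generators of the
   j-th factor Cl_q(1,k); the j-th factor is graded in Z e_j. *)
Definition tens_gen (F : fieldType) (C B : algType F) (n : nat)
    (gC : clgen 1 -> C) (iota : 'I_n -> C -> B) (l : 'I_n * clgen 1) : B :=
  iota l.1 (gC l.2).

Definition tens_deg (n : nat) (l : 'I_n * clgen 1) : {ffun 'I_n -> int} :=
  unitdeg l.1 *~ (cl_deg l.2 ord0).

Definition graded_alg_iso (F : fieldType) (A B : algType F) (LA LB : Type)
    (n : nat) (genA : LA -> A) (degA : LA -> {ffun 'I_n -> int})
    (genB : LB -> B) (degB : LB -> {ffun 'I_n -> int}) (f : A -> B) : Prop :=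
  [/\ is_alg_hom f, bijective f &
      forall d x, hcomp genA degA d x <-> hcomp genB degB d (f x)].

From Stdlib Require Import IndefiniteDescription.
From HB Require Import structures.
From mathcomp Require Import all_boot all_order all_algebra.
Import GRing.Theory.
Local Open Scope ring_scope.
Set Implicit Arguments. Unset Strict Implicit. Unset Printing Implicit Defensive.

(* A Jordan-Wigner transformation. In Cl_q(n,k) the parities
   K_a = psi_a psi_a^* - psi_a^* psi_a are pairwise commuting involutions, K_a
   anticommutes with psi_a and psi_a^* and commutes with every other generator.
   Multiplying psi_j and psi_j^* by the string S_j = K_0 ... K_(j-1) turns
   generators of different sites that anticommute into elements that commute,
   and conversely. So omega_j, omega_j^-1, S_j psi_j, S_j psi_j^* give commuting
   copies of Cl_q(1,k) inside Cl_q(n,k), hence a map from the tensor power;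
   the inverse sends psi_a to the string of the tensor parities times the a-th
   copy of psi. Both maps send strings to strings and S_a^2 = 1, so they are
   mutually inverse; strings have degree 0, so both preserve the grading. *)

Section AlgHom.
Variables (F : fieldType) (A B : algType F) (f : A -> B).
Hypothesis hf : is_alg_hom f.

Lemma alg_homD x y : f (x + y) = f x + f y. Proof. by case: hf. Qed.
Lemma alg_homZ c x : f (c *: x) = c *: f x. Proof. by case: hf. Qed.
Lemma alg_hom1 : f 1 = 1. Proof. by case: hf. Qed.
Lemma alg_homM x y : f (x * y) = f x * f y. Proof. by case: hf. Qed.
Lemma alg_hom0 : f 0 = 0. Proof. by rewrite -(scale0r 0) alg_homZ scale0r. Qed.
Lemma alg_homN x : f (- x) = - f x. Proof. by rewrite -scaleN1r alg_homZ scaleN1r. Qed.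
Lemma alg_homB x y : f (x - y) = f x - f y. Proof. by rewrite alg_homD alg_homN. Qed.

Lemma alg_homX x m : f (x ^+ m) = f x ^+ m.
Proof. by elim: m => [|m IHm]; rewrite ?alg_hom1 // !exprS alg_homM IHm. Qed.

Lemma alg_hom_prod (I : Type) (r : seq I) (P : pred I) (G : I -> A) :
  f (\prod_(i <- r | P i) G i) = \prod_(i <- r | P i) f (G i).
Proof. exact: (big_morph f alg_homM alg_hom1). Qed.

Lemma alg_hom_sum (I : Type) (r : seq I) (P : pred I) (G : I -> A) :
  f (\sum_(i <- r | P i) G i) = \sum_(i <- r | P i) f (G i).
Proof. exact: (big_morph f alg_homD alg_hom0). Qed.

End AlgHom.

Lemma id_alg_hom (F : fieldType) (A : algType F) : is_alg_hom (@id A).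
Proof. by []. Qed.

Lemma comp_alg_hom (F : fieldType) (A B D : algType F) (f : A -> B) (g : B -> D) :
  is_alg_hom f -> is_alg_hom g -> is_alg_hom (g \o f).
Proof.
move=> hf hg; split=> [x y|c x||x y] /=.
- by rewrite (alg_homD hf) (alg_homD hg).
- by rewrite (alg_homZ hf) (alg_homZ hg).
- by rewrite (alg_hom1 hf) (alg_hom1 hg).
- by rewrite (alg_homM hf) (alg_homM hg).
Qed.

Section HomogeneousComponents.
Variables (F : fieldType) (A : algType F) (L : Type) (N : nat).
Variables (gen : L -> A) (deg : L -> {ffun 'I_N -> int}).
Local Notation hc := (hcomp gen deg).

Lemma hcomp0 d : hc d 0.
Proof. by exists [::]; rewrite big_nil. Qed.

Lemma hcomp_word (w : seq L) : hc (\sum_(l <- w) deg l) (\prod_(l <- w) gen l).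
Proof.
by exists [:: (1, w)]; rewrite /= eqxx big_seq1 scale1r.
Qed.

Lemma hcomp1 : hc 0 1.
Proof. by have := hcomp_word [::]; rewrite !big_nil. Qed.

Lemma hcomp_gen l : hc (deg l) (gen l).
Proof. by have := hcomp_word [:: l]; rewrite !big_seq1. Qed.

Lemma hcompD d x y : hc d x -> hc d y -> hc d (x + y).
Proof.
move=> [s1 [h1 ->]] [s2 [h2 ->]]; exists (s1 ++ s2).
by rewrite all_cat h1 h2 big_cat.
Qed.

Lemma hcompZ d c x : hc d x -> hc d (c *: x).
Proof.
move=> [s [hs ->]]; exists [seq (c * p.1, p.2) | p <- s]; split.
  by rewrite all_map.
by rewrite big_map scaler_sumr; apply: eq_bigr => p _; rewrite scalerA.
Qed.

Lemma hcompB d x y : hc d x -> hc d y -> hc d (x - y).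
Proof. by move=> hx hy; rewrite -scaleN1r; apply/hcompD/hcompZ. Qed.

Lemma hcompM d1 d2 x y : hc d1 x -> hc d2 y -> hc (d1 + d2) (x * y).
Proof.
move=> [s1 [h1 ->]] [s2 [h2 ->]].
exists [seq (p1.1 * p2.1, p1.2 ++ p2.2) | p1 <- s1, p2 <- s2]; split.
  elim: s1 h1 => [|p1 s1 IHs] //= /andP[/eqP hp1 h1].
  rewrite all_cat IHs // andbT all_map; apply: sub_all h2 => p2 /eqP hp2 /=.
  by rewrite big_cat hp1 hp2.
rewrite big_allpairs_dep mulr_suml; apply: eq_bigr => p1 _.
rewrite mulr_sumr; apply: eq_bigr => p2 _.
by rewrite big_cat -scalerAl -scalerAr scalerA.
Qed.

Lemma hcomp_prod0 (I : Type) (r : seq I) (P : pred I) (G : I -> A) :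
  (forall i, P i -> hc 0 (G i)) -> hc 0 (\prod_(i <- r | P i) G i).
Proof.
move=> hG; apply: (big_ind (hc 0)) => //; first exact: hcomp1.
by move=> x y hx hy; rewrite -(addr0 0); apply: hcompM.
Qed.

Lemma hcomp_commutator l l' : deg l + deg l' = 0 ->
  hc 0 (gen l * gen l' - gen l' * gen l).
Proof.
move=> dl; apply: hcompB; rewrite -dl; last rewrite addrC;
  exact: hcompM (hcomp_gen _) (hcomp_gen _).
Qed.

End HomogeneousComponents.

Lemma hcomp_alg_hom (F : fieldType) (A B : algType F) (LA LB : Type) (N : nat)
    (genA : LA -> A) (degA : LA -> {ffun 'I_N -> int})
    (genB : LB -> B) (degB : LB -> {ffun 'I_N -> int}) (f : A -> B) :
  is_alg_hom f -> (forall l, hcomp genB degB (degA l) (f (genA l))) ->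
  forall d x, hcomp genA degA d x -> hcomp genB degB d (f x).
Proof.
move=> hf hgen d _ [s [hs ->]]; rewrite (alg_hom_sum hf).
elim: s hs => [|p s IHs] /=; first by rewrite big_nil => _; apply: hcomp0.
move=> /andP[/eqP dp hs]; rewrite big_cons; apply: hcompD; last exact: IHs.
rewrite (alg_homZ hf) (alg_hom_prod hf) -dp; apply: hcompZ.
elim: p.2 => [|l w IHw]; first by rewrite !big_nil; apply: hcomp1.
by rewrite !big_cons; apply: hcompM.
Qed.

Section DualNumbers.
Variables (F : fieldType) (A : algType F).

(* The pair (a, b) stands for a + b e, where e is central and e^2 = 0. *)
Definition dual : Type := (A * A)%type.
HB.instance Definition _ := GRing.Lmodule.copy dual (A * A)%type.

Definition dual_mul (x y : dual) : dual := (x.1 * y.1, x.1 * y.2 + x.2 * y.1).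
Definition dual_one : dual := (1, 0).

Lemma dual_mulA : associative dual_mul.
Proof.
move=> [a b] [c d] [e f]; congr (_, _); first by rewrite /= mulrA.
by rewrite /= mulrDr mulrDl !mulrA addrA.
Qed.

Lemma dual_mul1 : left_id dual_one dual_mul.
Proof. by move=> [a b]; rewrite /dual_mul /= !mul1r mul0r addr0. Qed.

Lemma dual_mulr1 : right_id dual_one dual_mul.
Proof. by move=> [a b]; rewrite /dual_mul /= !mulr1 mulr0 add0r. Qed.

Lemma dual_mulDl : left_distributive dual_mul +%R.
Proof.
move=> [a b] [c d] [e f]; congr (_, _); first by rewrite /= mulrDl.
by rewrite /= !mulrDl addrACA.
Qed.

Lemma dual_mulDr : right_distributive dual_mul +%R.
Proof.
move=> [a b] [c d] [e f]; congr (_, _); first by rewrite /= mulrDr.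
by rewrite /= !mulrDr addrACA.
Qed.

Lemma dual_one_neq0 : dual_one != 0.
Proof. by apply/eqP => -[] /eqP; rewrite oner_eq0. Qed.

HB.instance Definition _ := GRing.Zmodule_isNzRing.Build dual
  dual_mulA dual_mul1 dual_mulr1 dual_mulDl dual_mulDr dual_one_neq0.

Lemma dual_scalerAl (c : F) (x y : dual) : c *: (x * y) = (c *: x : dual) * y.
Proof.
by case: x y => [a b] [e f]; apply/eqP; rewrite xpair_eqE /= scalerDr -!scalerAl !eqxx.
Qed.

Lemma dual_scalerAr (c : F) (x y : dual) : c *: (x * y) = x * (c *: y : dual).
Proof.
by case: x y => [a b] [e f]; apply/eqP; rewrite xpair_eqE /= scalerDr -!scalerAr !eqxx.
Qed.

HB.instance Definition _ := GRing.Lmodule_isLalgebra.Build F dual dual_scalerAl.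
HB.instance Definition _ := GRing.Lalgebra_isAlgebra.Build F dual dual_scalerAr.

End DualNumbers.

Section ClUniversalProperty.
Variables (F : fieldType) (q : F) (N k : nat) (A : algType F) (g : clgen N -> A).

Lemma cl_rel_alg_hom (D : algType F) (f : A -> D) :
  is_alg_hom f -> cl_rel q k g -> cl_rel q k (f \o g).
Proof.
move=> hf hg; rewrite /cl_rel; cbv zeta => a b /=.
have [r1 [r2 [r3 [r4 [r5 [r6 [r7 [r8 [r9 r10]]]]]]]]] := hg a b.
rewrite -!(alg_homM hf) -!(alg_homZ hf) -!(alg_homD hf) -!(alg_homX hf).
rewrite r1 r2 r3 r4 r5 r6 r7 r8 r9 (alg_hom1 hf) (alg_hom0 hf).
by do 9!split=> //; move=> /r10 ->; rewrite (alg_hom0 hf).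
Qed.

Hypothesis HA : is_Cl q k g.

Lemma Cl_hom_eq (D : algType F) (f1 f2 : A -> D) :
  is_alg_hom f1 -> is_alg_hom f2 -> (forall l, f1 (g l) = f2 (g l)) -> f1 =1 f2.
Proof.
move=> hf1 hf2 e x.
have [f [_ _ uniq_f]] := HA.2 D (f2 \o g) (cl_rel_alg_hom hf2 HA.1).
by rewrite (uniq_f f1 hf1 e) (uniq_f f2 hf2 (fun _ => erefl)).
Qed.

Variable D : algType F.

(* x |-> (G x, G x z - z G x) and x |-> (G x, 0) are algebra maps into the dual
   numbers that agree on the generators. *)
Lemma Cl_comm (G : A -> D) (z : D) : is_alg_hom G ->
  (forall l, GRing.comm (G (g l)) z) -> forall x, GRing.comm (G x) z.
Proof.
move=> hG Gz x.
pose G0 x : dual D := (G x, 0).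
pose Gd x : dual D := (G x, G x * z - z * G x).
have hG0 : is_alg_hom G0.
  split=> [u v|c u||u v]; rewrite /G0 ?(alg_homD hG) ?(alg_homZ hG) ?(alg_hom1 hG)
    ?(alg_homM hG); congr (_, _).
  - by rewrite /= addr0.
  - by rewrite /= scaler0.
  - by rewrite /= mulr0 mul0r addr0.
have hGd : is_alg_hom Gd.
  split=> [u v|c u||u v]; rewrite /Gd ?(alg_homD hG) ?(alg_homZ hG) ?(alg_hom1 hG)
    ?(alg_homM hG); congr (_, _) => /=.
  - by rewrite mulrDl mulrDr opprD addrACA.
  - by rewrite scalerBr -scalerAl -scalerAr.
  - by rewrite mul1r mulr1 subrr.
  - by rewrite mulrBr mulrBl !mulrA addrA subrK.
have Gd_gen l : Gd (g l) = G0 (g l) by rewrite /Gd /G0 (Gz l) subrr.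
by case: (Cl_hom_eq hGd hG0 Gd_gen x) => /eqP; rewrite subr_eq0 => /eqP.
Qed.

Definition Cl_lift (h : clgen N -> D) (hh : cl_rel q k h) : A -> D :=
  sval (constructive_indefinite_description _ (HA.2 D h hh)).

Variables (h : clgen N -> D) (hh : cl_rel q k h).

Lemma Cl_lift_alg_hom : is_alg_hom (Cl_lift hh).
Proof. by rewrite /Cl_lift; case: (constructive_indefinite_description _ _) => ? []. Qed.

Lemma Cl_lift_gen l : Cl_lift hh (g l) = h l.
Proof. by rewrite /Cl_lift; case: (constructive_indefinite_description _ _) => ? []. Qed.

End ClUniversalProperty.

Section TensorUniversalProperty.
Variables (F : fieldType) (C B : algType F) (n : nat) (iota : 'I_n -> C -> B).
Hypothesis HB : is_tensor_power iota.

Lemma tensor_power_alg_hom j : is_alg_hom (iota j).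
Proof. by case: HB. Qed.

Lemma tensor_powerC i j x y : i != j -> iota i x * iota j y = iota j y * iota i x.
Proof. by case: HB => _ iotaC _; apply: iotaC. Qed.

Variable D : algType F.

Lemma tensor_hom_eq (h1 h2 : B -> D) : is_alg_hom h1 -> is_alg_hom h2 ->
  (forall j x, h1 (iota j x) = h2 (iota j x)) -> h1 =1 h2.
Proof.
move=> hh1 hh2 e y; case: HB => _ _ /(_ D (fun j => h2 \o iota j)) [].
- by move=> j; apply: comp_alg_hom (tensor_power_alg_hom j) hh2.
- by move=> i j u v ij /=; rewrite -!(alg_homM hh2) tensor_powerC.
by move=> h [_ _ uniq_h]; rewrite (uniq_h h1 hh1 e) (uniq_h h2 hh2 (fun _ _ => erefl)).
Qed.

Variables (gg : 'I_n -> C -> D) (gg_hom : forall j, is_alg_hom (gg j)).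
Hypothesis ggC : forall i j x y, i != j -> gg i x * gg j y = gg j y * gg i x.

Lemma tensor_lift_subproof :
  exists h : B -> D, is_alg_hom h /\ forall j x, h (iota j x) = gg j x.
Proof. by case: HB => _ _ /(_ D gg gg_hom ggC) [h [hh hiota _]]; exists h. Qed.

Definition tensor_lift : B -> D :=
  sval (constructive_indefinite_description _ tensor_lift_subproof).

Lemma tensor_lift_alg_hom : is_alg_hom tensor_lift.
Proof. by rewrite /tensor_lift; case: (constructive_indefinite_description _ _) => ? []. Qed.

Lemma tensor_lift_iota j x : tensor_lift (iota j x) = gg j x.
Proof. by rewrite /tensor_lift; case: (constructive_indefinite_description _ _) => ? []. Qed.

End TensorUniversalProperty.

Section CommutationRules.
Variable R : pzRingType.

Lemma anticomm_eq (x y : R) : x * y + y * x = 0 -> y * x = - (x * y).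
Proof. by move/eqP; rewrite addrC addr_eq0 => /eqP. Qed.

Lemma commr_anticomm (z x y : R) :
  z * x = - (x * z) -> z * y = - (y * z) -> GRing.comm z (x * y).
Proof.
by move=> zx zy; rewrite /GRing.comm mulrA zx mulNr -[x * z * y]mulrA zy mulrN opprK mulrA.
Qed.

Lemma commr_inverse (z x x' : R) :
  GRing.comm z x -> x * x' = 1 -> x' * x = 1 -> GRing.comm z x'.
Proof.
move=> zx xx' x'x; rewrite /GRing.comm.
by rewrite -[z * x']mul1r -x'x -mulrA (mulrA x z) -zx -(mulrA z) xx' mulr1.
Qed.

End CommutationRules.

Lemma commr_scaled (F : fieldType) (A : algType F) (z x y : A) (c c' : F) :
  c * c' = 1 -> z * x = c *: (x * z) -> z * y = c' *: (y * z) -> GRing.comm z (x * y).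
Proof.
move=> cc' zx zy; rewrite /GRing.comm mulrA zx -scalerAl -[x * z * y]mulrA zy.
by rewrite -scalerAr scalerA cc' scale1r mulrA.
Qed.

Definition cl_parity (F : fieldType) (N : nat) (A : algType F) (g : clgen N -> A)
    (a : 'I_N) : A :=
  g (Psi a) * g (PsiS a) - g (PsiS a) * g (Psi a).

Section CliffordRelations.
Variables (F : fieldType) (q : F) (N k : nat).
Hypotheses (two_neq0 : (2%:R : F) != 0) (q_neq0 : q != 0).
Variables (A : algType F) (g : clgen N -> A).
Hypothesis hg : cl_rel q k g.
Local Notation psi a := (g (Psi a)).
Local Notation psis a := (g (PsiS a)).
Local Notation om a := (g (Om a)).
Local Notation omI a := (g (OmI a)).
Local Notation K := (cl_parity g).

Lemma cl_omC a b : om a * om b = om b * om a.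
Proof. by have [] := hg a b. Qed.
Lemma cl_om_omI a : om a * omI a = 1.
Proof. by have [_ []] := hg a a. Qed.
Lemma cl_omI_om a : omI a * om a = 1.
Proof. by have [_ [_ []]] := hg a a. Qed.
Lemma cl_om_psi a b : om a * psi b = (if a == b then q else 1) *: (psi b * om a).
Proof. by have [_ [_ [_ []]]] := hg a b. Qed.
Lemma cl_om_psis a b : om a * psis b = (if a == b then q^-1 else 1) *: (psis b * om a).
Proof. by have [_ [_ [_ [_ []]]]] := hg a b. Qed.
Lemma cl_psi_anti a b : psi a * psi b + psi b * psi a = 0.
Proof. by have [_ [_ [_ [_ [_ []]]]]] := hg a b. Qed.
Lemma cl_psis_anti a b : psis a * psis b + psis b * psis a = 0.
Proof. by have [_ [_ [_ [_ [_ [_ []]]]]]] := hg a b. Qed.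
Lemma cl_psi_psis_omI a : psi a * psis a + q ^+ k *: (psis a * psi a) = omI a ^+ k.
Proof. by have [_ [_ [_ [_ [_ [_ [_ []]]]]]]] := hg a a. Qed.
Lemma cl_psi_psis_om a : psi a * psis a + q ^- k *: (psis a * psi a) = om a ^+ k.
Proof. by have [_ [_ [_ [_ [_ [_ [_ [_ []]]]]]]]] := hg a a. Qed.
Lemma cl_psi_psis_anti a b : a != b -> psi a * psis b + psis b * psi a = 0.
Proof. by have [_ [_ [_ [_ [_ [_ [_ [_ [_ ]]]]]]]]] := hg a b. Qed.

Lemma cl_omI_comm a x : GRing.comm (om a) x -> GRing.comm (omI a) x.
Proof.
move=> /commr_sym ax; apply/commr_sym/(commr_inverse ax).
  exact: cl_om_omI.
exact: cl_omI_om.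
Qed.

Lemma cl_om_comm_psi a b : a != b -> GRing.comm (om a) (psi b).
Proof. by move=> /negbTE ab; rewrite /GRing.comm cl_om_psi ab scale1r. Qed.

Lemma cl_om_comm_psis a b : a != b -> GRing.comm (om a) (psis b).
Proof. by move=> /negbTE ab; rewrite /GRing.comm cl_om_psis ab scale1r. Qed.

Lemma parity_om a b : GRing.comm (om b) (K a).
Proof.
have qq : (if b == a then q else 1) * (if b == a then q^-1 else 1) = 1.
  by case: (b == a); rewrite ?mulfV ?mulr1.
apply: commrB; first exact: commr_scaled qq (cl_om_psi b a) (cl_om_psis b a).
by rewrite mulrC in qq; apply: commr_scaled qq (cl_om_psis b a) (cl_om_psi b a).
Qed.

Lemma parity_psi_comm a b : a != b -> GRing.comm (psi b) (K a).
Proof.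
move=> ab; have psi_psi : psi b * psi a = - (psi a * psi b).
  exact/anticomm_eq/cl_psi_anti.
have psi_psis : psi b * psis a = - (psis a * psi b).
  by apply/anticomm_eq; rewrite addrC cl_psi_psis_anti // eq_sym.
by apply: commrB; apply: commr_anticomm.
Qed.

Lemma parity_psis_comm a b : a != b -> GRing.comm (psis b) (K a).
Proof.
move=> ab; have psis_psi : psis b * psi a = - (psi a * psis b).
  exact/anticomm_eq/cl_psi_psis_anti.
have psis_psis : psis b * psis a = - (psis a * psis b).
  exact/anticomm_eq/cl_psis_anti.
by apply: commrB; apply: commr_anticomm.
Qed.

Lemma parityC a b : GRing.comm (K a) (K b).
Proof.
have [->|ab] := eqVneq a b; first exact: commr_refl.
have Kpsi := commr_sym (parity_psi_comm ab).
have Kpsis := commr_sym (parity_psis_comm ab).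
by apply: commrB; apply: commrM.
Qed.

Lemma sqr_eq0_anticomm (x : A) : x * x + x * x = 0 -> x * x = 0.
Proof.
move=> xx; have : (2%:R : F) *: (x * x) = 0 by rewrite scaler_nat mulr2n.
by move/eqP; rewrite scaler_eq0 (negbTE two_neq0) => /eqP.
Qed.

Lemma cl_psi_sqr a : psi a * psi a = 0.
Proof. exact/sqr_eq0_anticomm/cl_psi_anti. Qed.

Lemma cl_psis_sqr a : psis a * psis a = 0.
Proof. exact/sqr_eq0_anticomm/cl_psis_anti. Qed.

Lemma parity_psi a : K a * psi a = - (psi a * K a).
Proof.
by rewrite mulrBl mulrBr -!mulrA cl_psi_sqr !mulrA cl_psi_sqr mulr0 mul0r subr0 sub0r opprK.
Qed.

Lemma parity_psis a : K a * psis a = - (psis a * K a).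
Proof.
by rewrite mulrBl mulrBr -!mulrA cl_psis_sqr !mulrA cl_psis_sqr mulr0 mul0r subr0 sub0r.
Qed.

(* With M = psi psis and M' = psis psi one has M M' = M' M = 0, M^2 = omI^k M
   and M'^2 = q^-k omI^k M', so K^2 = omI^k (M + q^-k M') = omI^k om^k = 1. *)
Lemma parity_sqr a : K a * K a = 1.
Proof.
set M := psi a * psis a; set M' := psis a * psi a.
have MM' : M * M' = 0 by rewrite mulrA -(mulrA (psi a)) cl_psis_sqr mulr0 mul0r.
have M'M : M' * M = 0 by rewrite mulrA -(mulrA (psis a)) cl_psi_sqr mulr0 mul0r.
have MM : M * M = omI a ^+ k * M.
  rewrite -cl_psi_psis_omI mulrDl -scalerAl -/M -/M' M'M scaler0 addr0.
  by rewrite /M mulrA.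
have M'M' : M' * M' = q ^- k *: (omI a ^+ k * M').
  rewrite -cl_psi_psis_omI mulrDl -/M -/M' MM' add0r -scalerAl scalerA.
  by rewrite mulVf ?expf_neq0 // scale1r.
have omIom : omI a ^+ k * om a ^+ k = 1.
  by rewrite -exprMn_comm ?cl_omI_om ?expr1n // /GRing.comm cl_omI_om cl_om_omI.
rewrite mulrBl !mulrBr MM' M'M MM M'M' subr0 sub0r opprK scalerAr -mulrDr.
by rewrite cl_psi_psis_om omIom.
Qed.

End CliffordRelations.

Lemma mulr_prod_sign (R : pzRingType) (I : eqType) (r : seq I) (P : pred I)
    (K : I -> R) (x : R) (i : I) :
  K i * x = - (x * K i) -> (forall j, j != i -> GRing.comm (K j) x) ->
  x * \prod_(j <- r | P j) K j =
    (-1) ^+ count (fun j => P j && (j == i)) r * (\prod_(j <- r | P j) K j * x).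
Proof.
move=> Kix Kjx; elim: r => [|j r IHr]; first by rewrite !big_nil /= expr0 mulr1 !mul1r.
rewrite big_cons /=; case: (P j) => /=; last by rewrite add0n.
rewrite mulrA; have [->|ji] := eqVneq j i.
  rewrite -[x * K i]opprK -Kix mulNr -mulrA IHr /= add1n exprS mulN1r mulNr.
  by rewrite !mulrA commr_sign.
by rewrite -(Kjx j ji) -mulrA IHr /= add0n !mulrA commr_sign.
Qed.

Section JordanWignerString.
Variables (R : pzRingType) (n : nat) (K : 'I_n -> R).
Hypotheses (K_comm : forall i j, GRing.comm (K i) (K j)) (K_sqr : forall j, K j * K j = 1).

Definition jw_string (a : 'I_n) : R := \prod_(j < n | (j < a)%N) K j.

Definition odd_at (i : 'I_n) (x : R) : Prop :=
  K i * x = - (x * K i) /\ forall j, j != i -> GRing.comm (K j) x.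

Local Notation S := jw_string.

Lemma jw_string_sqr a : S a * S a = 1.
Proof.
rewrite /S; elim: (index_enum _) => [|j r IHr]; first by rewrite big_nil mulr1.
rewrite big_cons; case: ifP => // _.
have Kj_r : GRing.comm (K j) (\prod_(i <- r | (i < a)%N) K i).
  by apply: commr_prod => i _; apply: K_comm.
by rewrite -mulrA (mulrA _ (K j)) -Kj_r -mulrA IHr mulr1 K_sqr.
Qed.

Lemma jw_stringC a b : GRing.comm (S a) (S b).
Proof.
by rewrite /jw_string; apply: commr_prod => j _; apply/commr_sym/commr_prod => i _.
Qed.

Lemma jw_string_even a x : (forall j, GRing.comm (K j) x) -> GRing.comm (S a) x.
Proof. by move=> Kx; apply/commr_sym/commr_prod => j _; apply/commr_sym/Kx. Qed.

Lemma jw_string_odd i a x : odd_at i x -> x * S a = (-1) ^+ (i < a)%N * (S a * x).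
Proof.
case=> Kix Kjx; rewrite /S (mulr_prod_sign _ _ Kix Kjx); congr (_ ^+ _ * _).
rewrite (eq_count (a2 := fun j => (i < a)%N && (j == i))); last first.
  by move=> j /=; case: eqP => [->|_]; rewrite ?andbF.
case: (i < a)%N; last by rewrite count_pred0.
by rewrite count_uniq_mem ?index_enum_uniq ?mem_index_enum.
Qed.

Lemma jw_string_odd_comm i x : odd_at i x -> GRing.comm (S i) x.
Proof. by move=> /(jw_string_odd i); rewrite ltnn mul1r. Qed.

Lemma jw_mul_same a x y : GRing.comm (S a) x -> (S a * x) * (S a * y) = x * y.
Proof. by move=> Sx; rewrite -mulrA (mulrA x) -Sx !mulrA jw_string_sqr mul1r. Qed.

(* Pushing x past S j and y past S i picks up the signs (-1)^(i<j) and
   (-1)^(j<i), exactly one of which is -1. *)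
Lemma jw_cross i j x y : i != j -> odd_at i x -> odd_at j y ->
  exists c, (S i * x) * (S j * y) = c * (x * y) /\ (S j * y) * (S i * x) = - (c * (y * x)).
Proof.
move=> ij xi yj; exists ((-1) ^+ (i < j)%N * (S i * S j)); split.
  by rewrite -mulrA (mulrA x) (jw_string_odd j xi) !mulrA commr_sign.
have sign_ji : (-1) ^+ (j < i)%N = - (-1) ^+ (i < j)%N :> R.
  case: ltngtP => [_|_|/val_inj eq_ij] /=; rewrite ?expr0 ?opprK //.
  by rewrite eq_ij eqxx in ij.
rewrite -mulrA (mulrA y) (jw_string_odd i yj) sign_ji !mulNr mulrN.
by rewrite (jw_stringC i j) !mulrA commr_sign.
Qed.

Lemma jw_cross_anti i j x y : i != j -> odd_at i x -> odd_at j y -> x * y = y * x ->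
  (S i * x) * (S j * y) + (S j * y) * (S i * x) = 0.
Proof. by move=> ij xi yj xy; have [c [-> ->]] := jw_cross ij xi yj; rewrite xy subrr. Qed.

Lemma jw_cross_comm i j x y : i != j -> odd_at i x -> odd_at j y -> y * x = - (x * y) ->
  GRing.comm (S i * x) (S j * y).
Proof.
move=> ij xi yj yx; have [c [xy yx']] := jw_cross ij xi yj.
by rewrite /GRing.comm xy yx' yx mulrN opprK.
Qed.

End JordanWignerString.

Section TensorSide.
Variables (F : fieldType) (q : F) (n k : nat).
Hypotheses (two_neq0 : (2%:R : F) != 0) (q_neq0 : q != 0).
Variables (C : algType F) (gC : clgen 1 -> C) (B : algType F) (iota : 'I_n -> C -> B).
Hypotheses (HC : cl_rel q k gC) (iota_hom : forall j, is_alg_hom (iota j))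
  (iotaC : forall i j x y, i != j -> iota i x * iota j y = iota j y * iota i x).

Local Notation KC := (cl_parity gC ord0).
Local Notation K j := (iota j KC).
Local Notation P := (jw_string (fun j => K j)).

Definition jw_tensor_gens (l : clgen n) : B :=
  match l with
  | Psi a => P a * iota a (gC (Psi ord0))
  | PsiS a => P a * iota a (gC (PsiS ord0))
  | Om a => iota a (gC (Om ord0))
  | OmI a => iota a (gC (OmI ord0))
  end.

Lemma iota_parityC i j : GRing.comm (K i) (K j).
Proof. by have [->|ij] := eqVneq i j; [apply: commr_refl|apply: iotaC]. Qed.

Lemma iota_parity_sqr j : K j * K j = 1.
Proof.
by rewrite -(alg_homM (iota_hom j)) (parity_sqr two_neq0 q_neq0 HC) (alg_hom1 (iota_hom j)).
Qed.

Lemma iota_odd_at a x : KC * x = - (x * KC) -> odd_at (fun j => K j) a (iota a x).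
Proof.
move=> Kx; split=> [|j ja]; last exact: iotaC.
by rewrite -!(alg_homM (iota_hom a)) Kx (alg_homN (iota_hom a)).
Qed.

Lemma iota_even a x : GRing.comm KC x -> forall j, GRing.comm (K j) (iota a x).
Proof.
move=> Kx j; have [->|ja] := eqVneq j a; last exact: iotaC.
by rewrite /GRing.comm -!(alg_homM (iota_hom a)) Kx.
Qed.

Lemma jw_tensor_same a x y : KC * x = - (x * KC) ->
  (P a * iota a x) * (P a * iota a y) = iota a (x * y).
Proof.
move=> Kx; rewrite (jw_mul_same iota_parityC iota_parity_sqr) ?(alg_homM (iota_hom a)) //.
exact/jw_string_odd_comm/iota_odd_at.
Qed.

Lemma jw_tensor_anti a b x y : KC * x = - (x * KC) -> KC * y = - (y * KC) ->
  (a = b -> x * y + y * x = 0) ->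
  (P a * iota a x) * (P b * iota b y) + (P b * iota b y) * (P a * iota a x) = 0.
Proof.
move=> Kx Ky xy; have [eq_ab|ab] := eqVneq a b.
  rewrite -eq_ab !jw_tensor_same // -(alg_homD (iota_hom a)) xy //.
  exact: alg_hom0.
apply: (jw_cross_anti iota_parityC ab (iota_odd_at a Kx) (iota_odd_at b Ky)).
exact: iotaC.
Qed.

Lemma jw_tensor_om a b c x :
  gC (Om ord0) * x = c *: (x * gC (Om ord0)) ->
  iota a (gC (Om ord0)) * (P b * iota b x) =
    (if a == b then c else 1) *: ((P b * iota b x) * iota a (gC (Om ord0))).
Proof.
move=> omx; have Pom : GRing.comm (P b) (iota a (gC (Om ord0))).
  by apply: jw_string_even => j; apply/iota_even/commr_sym/(parity_om q_neq0 HC).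
rewrite mulrA -Pom -!mulrA; have [<-|ab] := eqVneq a b.
  by rewrite -!(alg_homM (iota_hom a)) omx (alg_homZ (iota_hom a)) -scalerAr.
by rewrite scale1r iotaC.
Qed.

Lemma jw_tensor_rel : cl_rel q k jw_tensor_gens.
Proof.
have Kpsi := parity_psi two_neq0 HC ord0; have Kpsis := parity_psis two_neq0 HC ord0.
rewrite /cl_rel; cbv zeta => a b /=; have hom_a := iota_hom a.
split; first by have [->|ab] := eqVneq a b; [|apply: iotaC].
split; first by rewrite -(alg_homM hom_a) (cl_om_omI HC) (alg_hom1 hom_a).
split; first by rewrite -(alg_homM hom_a) (cl_omI_om HC) (alg_hom1 hom_a).
split; first by apply: jw_tensor_om; rewrite (cl_om_psi HC) eqxx.
split; first by apply: jw_tensor_om; rewrite (cl_om_psis HC) eqxx.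
split; first by apply: jw_tensor_anti => // _; apply: (cl_psi_anti HC).
split; first by apply: jw_tensor_anti => // _; apply: (cl_psis_anti HC).
split; first by rewrite !jw_tensor_same // -(alg_homZ hom_a) -(alg_homD hom_a)
  (cl_psi_psis_omI HC) (alg_homX hom_a).
split; first by rewrite !jw_tensor_same // -(alg_homZ hom_a) -(alg_homD hom_a)
  (cl_psi_psis_om HC) (alg_homX hom_a).
by move=> ab; apply: jw_tensor_anti => // eq_ab; rewrite eq_ab eqxx in ab.
Qed.

End TensorSide.

Section FactorSide.
Variables (F : fieldType) (q : F) (n k : nat).
Hypotheses (two_neq0 : (2%:R : F) != 0) (q_neq0 : q != 0).
Variables (A : algType F) (g : clgen n -> A).
Hypothesis HA : cl_rel q k g.
Local Notation psi a := (g (Psi a)).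
Local Notation psis a := (g (PsiS a)).
Local Notation om a := (g (Om a)).
Local Notation omI a := (g (OmI a)).
Local Notation Q := (jw_string (cl_parity g)).

Definition jw_factor_gens (j : 'I_n) (l : clgen 1) : A :=
  match l with
  | Psi _ => Q j * psi j
  | PsiS _ => Q j * psis j
  | Om _ => om j
  | OmI _ => omI j
  end.

Lemma psi_odd_at a : odd_at (cl_parity g) a (psi a).
Proof.
split=> [|j ja]; first exact: parity_psi.
by apply: commr_sym; apply: parity_psi_comm.
Qed.

Lemma psis_odd_at a : odd_at (cl_parity g) a (psis a).
Proof.
split=> [|j ja]; first exact: parity_psis.
by apply: commr_sym; apply: parity_psis_comm.
Qed.

Lemma jw_factor_same a x y : odd_at (cl_parity g) a x -> (Q a * x) * (Q a * y) = x * y.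
Proof.
by move=> xa; apply: (jw_mul_same (parityC HA) (parity_sqr two_neq0 q_neq0 HA));
  apply: jw_string_odd_comm xa.
Qed.

Lemma jw_factor_psi a y : (Q a * psi a) * (Q a * y) = psi a * y.
Proof. exact/jw_factor_same/psi_odd_at. Qed.

Lemma jw_factor_psis a y : (Q a * psis a) * (Q a * y) = psis a * y.
Proof. exact/jw_factor_same/psis_odd_at. Qed.

Lemma jw_string_om a b : GRing.comm (Q b) (om a).
Proof. by apply: jw_string_even => j; apply/commr_sym/(parity_om q_neq0 HA). Qed.

Lemma jw_factor_om a b c x : om a * x = c *: (x * om a) ->
  om a * (Q b * x) = c *: ((Q b * x) * om a).
Proof. by move=> omx; rewrite mulrA -jw_string_om -!mulrA omx -scalerAr. Qed.

Lemma jw_factor_rel j : cl_rel q k (jw_factor_gens j).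
Proof.
rewrite /cl_rel; cbv zeta => a b /=; rewrite (ord1 a) (ord1 b) eqxx.
split=> //; split; first exact: cl_om_omI.
split; first exact: cl_omI_om.
split; first by apply: jw_factor_om; rewrite (cl_om_psi HA) eqxx.
split; first by apply: jw_factor_om; rewrite (cl_om_psis HA) eqxx.
split; first by rewrite jw_factor_psi (cl_psi_anti HA).
split; first by rewrite jw_factor_psis (cl_psis_anti HA).
split; first by rewrite jw_factor_psi jw_factor_psis (cl_psi_psis_omI HA).
split; first by rewrite jw_factor_psi jw_factor_psis (cl_psi_psis_om HA).
by [].
Qed.

Lemma om_comm_factor i j l : i != j -> GRing.comm (om i) (jw_factor_gens j l).
Proof.
move=> ij; case: l => _ /=.
- by apply: commrM; [apply/commr_sym/jw_string_om|apply: cl_om_comm_psi].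
- by apply: commrM; [apply/commr_sym/jw_string_om|apply: cl_om_comm_psis].
- exact: cl_omC.
- by apply/commr_sym/cl_omI_comm/cl_omC.
Qed.

Lemma jw_factor_comm i j l l' : i != j ->
  GRing.comm (jw_factor_gens i l) (jw_factor_gens j l').
Proof.
move=> ij; have ji : j != i by rewrite eq_sym.
have jw_comm := jw_cross_comm (parityC HA) ij.
case: l => x; last 2 first.
- exact: om_comm_factor.
- exact/(cl_omI_comm HA)/om_comm_factor.
all: case: l' => y; [| | exact/commr_sym/om_comm_factor
                        | exact/commr_sym/(cl_omI_comm HA)/om_comm_factor].
- apply: jw_comm (psi_odd_at i) (psi_odd_at j) _.
  exact/anticomm_eq/(cl_psi_anti HA).
- apply: jw_comm (psi_odd_at i) (psis_odd_at j) _.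
  exact/anticomm_eq/(cl_psi_psis_anti HA).
- apply: jw_comm (psis_odd_at i) (psi_odd_at j) _.
  by apply/anticomm_eq; rewrite addrC (cl_psi_psis_anti HA).
- apply: jw_comm (psis_odd_at i) (psis_odd_at j) _.
  exact/anticomm_eq/(cl_psis_anti HA).
Qed.

End FactorSide.

Definition cl_site (n : nat) (j : 'I_n) (l : clgen 1) : clgen n :=
  match l with Psi _ => Psi j | PsiS _ => PsiS j | Om _ => Om j | OmI _ => OmI j end.

Lemma tens_deg_site n (j : 'I_n) l : tens_deg (j, l) = cl_deg (cl_site j l).
Proof.
by case: l => x; rewrite /tens_deg /= ?ffunE ?(ord1 x) ?eqxx ?mulr1z ?mulrN1z ?mulr0z.
Qed.

Lemma hcomp_parity (F : fieldType) (A : algType F) (n : nat) (g : clgen n -> A) a :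
  hcomp g (@cl_deg n) 0 (cl_parity g a).
Proof. by apply: hcomp_commutator; rewrite /= addrN. Qed.

Section CliffordTensorIso.
Variables (F : fieldType) (q : F) (n k : nat).
Hypotheses (two_neq0 : (2%:R : F) != 0) (q_neq0 : q != 0).
Variables (A : algType F) (g : clgen n -> A) (C : algType F) (gC : clgen 1 -> C).
Variables (B : algType F) (iota : 'I_n -> C -> B).
Hypotheses (HA : is_Cl q k g) (HC : is_Cl q k gC) (HB : is_tensor_power iota).

Local Notation iota_hom := (tensor_power_alg_hom HB).
Local Notation iotaC := (tensor_powerC HB).
Local Notation KA := (cl_parity g).
Local Notation KB j := (iota j (cl_parity gC ord0)).
Local Notation Q := (jw_string KA).
Local Notation P := (jw_string (fun j => KB j)).

Let f := Cl_lift HA (jw_tensor_rel two_neq0 q_neq0 HC.1 iota_hom iotaC).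
Let gg j := Cl_lift HC (jw_factor_rel two_neq0 q_neq0 HA.1 j).

Let f_hom : is_alg_hom f := Cl_lift_alg_hom _ _.
Let f_gen l : f (g l) = jw_tensor_gens gC iota l := Cl_lift_gen _ _ l.
Let gg_hom j : is_alg_hom (gg j) := Cl_lift_alg_hom _ _.
Let gg_gen j l : gg j (gC l) = jw_factor_gens g j l := Cl_lift_gen _ _ l.

Lemma ggC i j x y : i != j -> gg i x * gg j y = gg j y * gg i x.
Proof.
move=> ij; have gg_gen_comm l' x' : GRing.comm (gg i x') (gg j (gC l')).
  apply: (Cl_comm HC (gg_hom i)) => l.
  by rewrite !gg_gen; apply: (jw_factor_comm two_neq0 q_neq0 HA.1).
by apply/commr_sym; apply: (Cl_comm HC (gg_hom j)) => l'; apply/commr_sym.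
Qed.

Let Q_sqr := jw_string_sqr (parityC HA.1) (parity_sqr two_neq0 q_neq0 HA.1).
Let P_sqr :=
  jw_string_sqr (iota_parityC gC iotaC) (iota_parity_sqr two_neq0 q_neq0 HC.1 iota_hom).

Let f' := tensor_lift HB gg_hom ggC.
Let f'_hom : is_alg_hom f' := tensor_lift_alg_hom _ _ _.
Let f'_iota j x : f' (iota j x) = gg j x := tensor_lift_iota _ _ _ j x.

Lemma f_jw_string a : f (Q a) = P a.
Proof.
rewrite (alg_hom_prod f_hom); apply: eq_bigr => j _.
rewrite /cl_parity (alg_homB f_hom) !(alg_homM f_hom) !f_gen /=.
have Kpsi := parity_psi two_neq0 HC.1 ord0; have Kpsis := parity_psis two_neq0 HC.1 ord0.
by rewrite !(jw_tensor_same two_neq0 q_neq0 HC.1 iota_hom iotaC) // -(alg_homB (iota_hom j)).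
Qed.

Lemma gg_parity j : gg j (cl_parity gC ord0) = KA j.
Proof.
rewrite /cl_parity (alg_homB (gg_hom j)) !(alg_homM (gg_hom j)) !gg_gen /=.
by rewrite (jw_factor_psi two_neq0 q_neq0 HA.1) (jw_factor_psis two_neq0 q_neq0 HA.1).
Qed.

Lemma f'_jw_string a : f' (P a) = Q a.
Proof.
by rewrite (alg_hom_prod f'_hom); apply: eq_bigr => j _; rewrite f'_iota gg_parity.
Qed.

Lemma fK : cancel f f'.
Proof.
move=> x; apply: (Cl_hom_eq HA (comp_alg_hom f_hom f'_hom) (id_alg_hom A)) => l /=.
rewrite f_gen; case: l => a /=;
  by rewrite ?(alg_homM f'_hom) ?f'_jw_string f'_iota gg_gen // mulrA Q_sqr mul1r.
Qed.

Lemma f_gg j x : f (gg j x) = iota j x.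
Proof.
apply: (Cl_hom_eq HC (comp_alg_hom (gg_hom j) f_hom) (iota_hom j)) => l /=.
rewrite gg_gen; case: l => a /=; rewrite (ord1 a);
  by rewrite ?(alg_homM f_hom) ?f_jw_string f_gen // mulrA P_sqr mul1r.
Qed.

Lemma f'K : cancel f' f.
Proof.
move=> y; apply: (tensor_hom_eq HB (comp_alg_hom f'_hom f_hom) (id_alg_hom B)) => j x /=.
by rewrite f'_iota f_gg.
Qed.

Local Notation hcA := (hcomp g (@cl_deg n)).
Local Notation hcB := (hcomp (tens_gen gC iota) (@tens_deg n)).

Lemma hcomp_iota j l : hcB (cl_deg (cl_site j l)) (iota j (gC l)).
Proof. by rewrite -tens_deg_site; apply: (hcomp_gen (tens_gen gC iota) _ (j, l)). Qed.

Lemma hcomp_P a : hcB 0 (P a).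
Proof.
apply: hcomp_prod0 => j _; rewrite /cl_parity (alg_homB (iota_hom j)) !(alg_homM (iota_hom j)).
by apply: (@hcomp_commutator _ _ _ _ (tens_gen gC iota) _ (j, Psi ord0) (j, PsiS ord0));
  rewrite !tens_deg_site /= addrN.
Qed.

Lemma hcomp_f d x : hcA d x -> hcB d (f x).
Proof.
apply: (hcomp_alg_hom f_hom) => l; rewrite f_gen; case: l => a.
- by rewrite -[cl_deg _]add0r; apply: hcompM (hcomp_P a) (hcomp_iota a (Psi ord0)).
- by rewrite -[cl_deg _]add0r; apply: hcompM (hcomp_P a) (hcomp_iota a (PsiS ord0)).
- exact: hcomp_iota a (Om ord0).
- exact: hcomp_iota a (OmI ord0).
Qed.

Lemma hcomp_f' d y : hcB d y -> hcA d (f' y).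
Proof.
apply: (hcomp_alg_hom f'_hom) => -[j l]; rewrite /tens_gen f'_iota gg_gen tens_deg_site.
have hcomp_Q : hcA 0 (Q j) by apply: hcomp_prod0 => i _; apply: hcomp_parity.
case: l => x.
- by rewrite -[cl_deg _]add0r; apply: hcompM hcomp_Q (hcomp_gen g _ (Psi j)).
- by rewrite -[cl_deg _]add0r; apply: hcompM hcomp_Q (hcomp_gen g _ (PsiS j)).
- exact: hcomp_gen g _ (Om j).
- exact: hcomp_gen g _ (OmI j).
Qed.

Lemma Cl_tensor_graded_iso :
  exists f : A -> B, graded_alg_iso g (@cl_deg n) (tens_gen gC iota) (@tens_deg n) f.
Proof.
exists f; split=> //; first by exists f'; [apply: fK|apply: f'K].
by move=> d x; split=> [|/hcomp_f']; [apply: hcomp_f|rewrite fK].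
Qed.

End CliffordTensorIso.

Unset Implicit Arguments.

Theorem corollary3p11 (F : fieldType) (hF : 2%N \notin [pchar F])
  (q : F) (hq : q != 0) (n k : nat) (hn : (0 < n)%N) (hk : (0 < k)%N)
  (A : algType F) (g : clgen n -> A) (HA : is_Cl q k g)
  (C : algType F) (gC : clgen 1 -> C) (HC : is_Cl q k gC)
  (B : algType F) (iota : 'I_n -> C -> B) (HB : is_tensor_power iota) :
  exists f : A -> B,
    graded_alg_iso g (@cl_deg n) (tens_gen gC iota) (@tens_deg n) f.
Proof.
have two_neq0 : (2%:R : F) != 0 by apply: contra hF => two0; rewrite inE /= two0.
exact: (Cl_tensor_graded_iso two_neq0 hq HA HC HB).
Qed.
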